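(* Let $s\in\mathbb{N}$ and let $\widehat{g}:\mathbb{N}\to\mathbb{C}$ be an arbitrary arithmetical function. Then the following are equivalent: (i) for every $a\in\mathbb{N}$, the series $g(a)=\sum_{r=1}^{\infty}\widehat{g}(r)\,c_r^{s}(a^s)$ converges absolutely; (ii) for every $a\in\mathbb{N}$, the series $\gamma(a)=a^s\sum_{m=1}^{\infty}\widehat{g}(am)\,\mu(m)$ converges absolutely. Moreover, in case of convergence, $\gamma=\mu*g$, i.e. $\gamma(a)=\sum_{d\mid a}\mu(a/d)g(d)$ for all $a\in\mathbb{N}$.
   Context: For $s\in\mathbb{N}$ and integers $a,b$, $(a,b)_s$ denotes the largest $d^s$ with $d\in\mathbb{N}$ such that $d^s\mid a$ and $d^s\mid b$. The Cohen–Ramanujan sum is defined for $r,s\in\mathbb{N}$ and $n\in\mathbb{Z}$ by $$c_r^{s}(n)=\sum_{\substack{h=1\\ (h,r^s)_s=1}}^{r^s} e^{2\pi i n h/r^s}.$$ $\mu$ is the Möbius function and $*$ denotes Dirichlet convolution. *)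

From Stdlib Require Import Reals.
From Coquelicot Require Import Coquelicot.
From mathcomp Require Import ssreflect ssrfun ssrbool eqtype ssrnat seq fintype div prime bigop.

Set Implicit Arguments.
Unset Strict Implicit.
Unset Printing Implicit Defensive.

(* (a,b)_s : the largest d^s (d >= 1) dividing both a and b (for a > 0). *)
Definition gcds (s a b : nat) : nat :=
  ((\max_(d < a.+1 | (0 < (d : nat)) && (d ^ s %| a) && (d ^ s %| b)) (d : nat)) ^ s)%N.

Definition csum (l : seq nat) (f : nat -> C) : C :=
  foldr (fun h acc => Cplus (f h) acc) (RtoC 0) l.

Definition e2pi (t : R) : C := (cos (2 * PI * t), sin (2 * PI * t)).

Definition cohen_ramanujan (s r n : nat) : C :=
  csum [seq h <- iota 1 (r ^ s) | gcds s h (r ^ s) == 1%N]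
       (fun h => e2pi (INR n * INR h / INR (r ^ s))).

(* Moebius function (mu 0 := 0, irrelevant). *)
Definition mobius (n : nat) : R :=
  if (0 < n)%N && all (fun p => logn p n == 1%N) (primes n)
  then ((-1) ^ size (primes n))%R else 0%R.

(* Term sequences, indexed from k = 0 for r = k+1 (resp. m = k+1). *)
Definition g_term (s : nat) (ghat : nat -> C) (a k : nat) : C :=
  Cmult (ghat k.+1) (cohen_ramanujan s k.+1 (a ^ s)).

Definition gamma_term (ghat : nat -> C) (a k : nat) : C :=
  Cmult (ghat (a * k.+1)%N) (RtoC (mobius k.+1)).

From Stdlib Require Import Reals Lra Lia.
From Coquelicot Require Import Coquelicot.
From mathcomp Require Import ssreflect ssrfun ssrbool eqtype ssrnat seq fintype div prime bigop.
From HB Require Import structures.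
From mathcomp Require Import zify.

(** Sieving the condition (h, r^s)_s = 1 with the Moebius function and summing
    the resulting geometric sums gives
      c_r^s(n) = sum_(d | r, d^s | n) mu(r/d) d^s,
    hence c_r^s(b^s) = sum_(d | r, d | b) mu(r/d) d^s.  Together with
    sum_(d | a, e | d) mu(a/d) = [e = a] this inverts to
      sum_(d | a) mu(a/d) c_r^s(d^s) = [a | r] mu(r/a) a^s.
    Thus the termwise combination sum_(d | a) mu(a/d) g(d) is a series supported
    on the multiples r of a, where its terms are a^s times those of gamma(a):
    this gives gamma = mu * g, and bounds |gamma(a)| by finitely many
    subseries of the series g(d).  Conversely, the terms of g(a) are bounded by
    those of the series d^s |gamma(d)|, d | a, spread over the multiples of d. *)

Set Implicit Arguments.
Unset Strict Implicit.
Unset Printing Implicit Defensive.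

HB.instance Definition _ :=
  Monoid.isComLaw.Build C (RtoC 0) Cplus Cplus_assoc Cplus_comm Cplus_0_l.
HB.instance Definition _ :=
  Monoid.isComLaw.Build R 0%R Rplus (fun x y z => esym (Rplus_assoc x y z))
    Rplus_comm Rplus_0_l.

Local Notation "\sum_ ( i <- r | P ) F" := (\big[Cplus/RtoC 0]_(i <- r | P%B) F%C) : C_scope.
Local Notation "\sum_ ( i <- r ) F" := (\big[Cplus/RtoC 0]_(i <- r) F%C) : C_scope.
Local Notation "\sum_ ( i <- r | P ) F" := (\big[Rplus/0%R]_(i <- r | P%B) F%R) : R_scope.
Local Notation "\sum_ ( i <- r ) F" := (\big[Rplus/0%R]_(i <- r) F%R) : R_scope.

Local Open Scope nat_scope.

(** * Divisor sums and the Moebius function *)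

Lemma divn_compl n d : 0 < n -> d %| n -> n %/ (n %/ d) = d.
Proof. by move=> n_gt0 dn; rewrite (divnA _ dn) mulKn // (dvdn_gt0 n_gt0 dn). Qed.

Section DivisorSums.

Variables (T : Type) (idx : T) (op : Monoid.com_law idx).

Lemma eq_big_uniq_mem (I : eqType) (s1 s2 : seq I) (F : I -> T) :
  uniq s1 -> uniq s2 -> s1 =i s2 ->
  \big[op/idx]_(i <- s1) F i = \big[op/idx]_(i <- s2) F i.
Proof. by move=> u1 u2 e; apply: perm_big; apply: uniq_perm. Qed.

Lemma big_pred1_seq (I : eqType) (r : seq I) i (F : I -> T) : uniq r ->
  \big[op/idx]_(j <- r | j == i) F j = if i \in r then F i else idx.
Proof.
move=> r_uniq; case: ifPn => ir; last by rewrite big_hasC // has_pred1.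
by rewrite -big_filter filter_pred1_uniq // big_seq1.
Qed.

Lemma big_divisors_compl n (F : nat -> T) : 0 < n ->
  \big[op/idx]_(d <- divisors n) F (n %/ d) = \big[op/idx]_(d <- divisors n) F d.
Proof.
move=> n_gt0; rewrite -(big_map (divn n) xpredT).
have uniq_compl : uniq (map (divn n) (divisors n)).
  rewrite map_inj_in_uniq ?divisors_uniq // => x y.
  by rewrite -!dvdn_divisors // => xn yn /(congr1 (divn n)); rewrite !divn_compl.
apply: eq_big_uniq_mem; rewrite ?divisors_uniq // => d.
apply/mapP/idP => [[e] | dn].
  by rewrite -!dvdn_divisors // => en ->; apply: dvdn_div.
rewrite -dvdn_divisors // in dn.
by exists (n %/ d); [rewrite -dvdn_divisors // dvdn_div | rewrite divn_compl].
Qed.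

Lemma big_dvdn_mul (s t : seq nat) q (F : nat -> T) :
  0 < q -> uniq s -> uniq t -> (forall j, (q * j \in s) = (j \in t)) ->
  \big[op/idx]_(x <- s | q %| x) F x = \big[op/idx]_(j <- t) F (q * j).
Proof.
move=> q_gt0 us ut st; rewrite -big_filter -(big_map (muln q) xpredT).
apply: eq_big_uniq_mem; first by rewrite filter_uniq.
  by rewrite map_inj_uniq // => x y /eqP; rewrite eqn_pmul2l // => /eqP.
move=> x; rewrite mem_filter; apply/andP/mapP => [[/dvdnP [j ->] xs] | [j jt ->]].
  by exists j; [rewrite -st mulnC | rewrite mulnC].
by rewrite dvdn_mulr // st.
Qed.

Lemma big_divisors_dvdn n q (F : nat -> T) : 0 < n -> q %| n ->
  \big[op/idx]_(d <- divisors n | q %| d) F d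
  = \big[op/idx]_(j <- divisors (n %/ q)) F (q * j).
Proof.
move=> n_gt0 qn; have q_gt0 := dvdn_gt0 n_gt0 qn.
have nq_gt0 : 0 < n %/ q by rewrite divn_gt0 // dvdn_leq.
apply: big_dvdn_mul; rewrite ?divisors_uniq // => j.
by rewrite -!dvdn_divisors // dvdn_divRL // mulnC.
Qed.

Lemma big_iota_dvdn N q (F : nat -> T) : 0 < q -> q %| N ->
  \big[op/idx]_(h <- iota 1 N | q %| h) F h
  = \big[op/idx]_(j <- iota 1 (N %/ q)) F (q * j).
Proof.
move=> q_gt0 /dvdnP [M ->]; apply: big_dvdn_mul; rewrite ?iota_uniq // => j.
by rewrite mulnK // !mem_iota !add1n !ltnS muln_gt0 q_gt0 mulnC leq_pmul2r.
Qed.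

Lemma big_divisors_dvdnC m n (F : nat -> T) : 0 < m -> 0 < n ->
  \big[op/idx]_(d <- divisors m | d %| n) F d = \big[op/idx]_(d <- divisors n | d %| m) F d.
Proof.
move=> m_gt0 n_gt0; rewrite -big_filter -[RHS]big_filter.
apply: eq_big_uniq_mem; rewrite ?filter_uniq ?divisors_uniq // => d.
by rewrite !mem_filter -!dvdn_divisors // andbC.
Qed.

End DivisorSums.

Lemma mobius_sq_dvd p d : prime p -> p ^ 2 %| d -> mobius d = 0%R.
Proof.
move=> p_pr p2d; rewrite /mobius; have [-> // | d_gt0] := posnP d.
have p_d : p \in primes d by rewrite mem_primes p_pr d_gt0 (dvdn_trans _ p2d) ?dvdn_exp.
case: allP => // /(_ p p_d) /eqP logp1.
by rewrite pfactor_dvdn // logp1 in p2d.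
Qed.

Lemma mobius_mul_prime p d : prime p -> 0 < d -> ~~ (p %| d) ->
  mobius (p * d) = (- mobius d)%R.
Proof.
move=> p_pr d_gt0 pNd; have p_gt0 := prime_gt0 p_pr.
have cop : coprime p d by rewrite prime_coprime.
have primesM : perm_eq (primes (p * d)) (p :: primes d).
  apply: uniq_perm; rewrite ?primes_uniq //=.
    by rewrite primes_uniq mem_primes p_pr d_gt0 pNd.
  by move=> q; rewrite primesM // primes_prime // !inE.
rewrite /mobius muln_gt0 p_gt0 d_gt0 (perm_all _ primesM) (perm_size primesM) /=.
rewrite lognM // logn_prime // eqxx logn_coprime //.
have -> : all (fun q => logn q (p * d) == 1) (primes d)
        = all (fun q => logn q d == 1) (primes d).
  apply: eq_in_all => q q_d; rewrite lognM // logn_prime //.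
  have qNp : q != p.
    by apply: contraNneq pNd => <-; rewrite mem_primes in q_d; case/and3P: q_d.
  by rewrite (negbTE qNp).
by rewrite addn0 /=; case: ifP => _; lra.
Qed.

Lemma mobius_le1 n : (Rabs (mobius n) <= 1)%R.
Proof.
rewrite /mobius; case: ifP => _; last by rewrite Rabs_R0; lra.
by rewrite -RPow_abs Rabs_m1 pow1; lra.
Qed.

Lemma sum_mobius_divisors n : 0 < n ->
  (\sum_(d <- divisors n) mobius d)%R = if n == 1 then 1%R else 0%R.
Proof.
move=> n_gt0; case: eqP => [-> | /eqP n_neq1].
  by rewrite /divisors /= big_cons big_nil /mobius /=; lra.
have p_pr : prime (pdiv n) by rewrite pdiv_prime // ltn_neqAle eq_sym n_neq1.
set p := pdiv n in p_pr *; have pn : p %| n := pdiv_dvd n.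
have np_gt0 : 0 < n %/ p by rewrite divn_gt0 ?prime_gt0 // dvdn_leq.
rewrite (bigID (dvdn p)) /= big_divisors_dvdn // (bigID (dvdn p)) /=.
rewrite big1 => [|t pt]; last first.
  by apply: (mobius_sq_dvd p_pr); rewrite expnS expn1 dvdn_pmul2l ?prime_gt0.
have -> : (\sum_(t <- divisors (n %/ p) | ~~ (p %| t)) mobius (p * t))%R
        = (\sum_(t <- divisors n | ~~ (p %| t)) - mobius t)%R.
  rewrite [LHS]big_seq_cond [LHS](eq_bigr (fun t => - mobius t)%R); last first.
    move=> t /andP [t_np pNt]; apply: mobius_mul_prime => //.
    by rewrite -dvdn_divisors // in t_np; apply: dvdn_gt0 t_np.
  rewrite -big_seq_cond -big_filter -[RHS]big_filter.
  apply: eq_big_uniq_mem; rewrite ?filter_uniq ?divisors_uniq // => t.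
  rewrite !mem_filter -!dvdn_divisors //; case pt: (p %| t) => //=.
  have cop : coprime t p by rewrite coprime_sym prime_coprime ?pt.
  by rewrite dvdn_divRL // Gauss_dvd // pn andbT.
rewrite Rplus_0_l -big_split big1 //= => t _; lra.
Qed.

Lemma sum_mobius_quotient_multiples q a : 0 < q -> 0 < a ->
  (\sum_(d <- divisors a | q %| d) mobius (a %/ d))%R = if q == a then 1%R else 0%R.
Proof.
move=> q_gt0 a_gt0; have [qa | qNa] := boolP (q %| a); last first.
  rewrite big1_seq => [|d /andP [qd]]; last first.
    by rewrite -dvdn_divisors // => /(dvdn_trans qd); rewrite (negbTE qNa).
  by case: eqP qNa => // ->; rewrite dvdnn.
have aq_gt0 : 0 < a %/ q by rewrite divn_gt0 // dvdn_leq.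
rewrite big_divisors_dvdn //.
under eq_bigr do rewrite divnMA.
rewrite (big_divisors_compl _ mobius) // sum_mobius_divisors //.
congr (if _ then _ else _); apply/eqP/eqP => [aq1 | ->]; last by rewrite divnn a_gt0.
by rewrite -(divnK qa) aq1 mul1n.
Qed.

(** * The condition (h, r^s)_s = 1 *)

Section PowerGcd.

Variable s : nat.
Hypothesis s_gt0 : 0 < s.

Lemma leq_expn_self d : 0 < d -> d <= d ^ s.
Proof. by move=> d_gt0; rewrite -{1}(expn1 d) leq_pexp2l. Qed.

Lemma expn_lcm x y : 0 < x -> 0 < y -> lcmn x y ^ s = lcmn (x ^ s) (y ^ s).
Proof.
move=> x_gt0 y_gt0; apply: eqn_from_log => [||p].
- by rewrite expn_gt0 lcmn_gt0 x_gt0 y_gt0.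
- by rewrite lcmn_gt0 !expn_gt0 x_gt0 y_gt0.
by rewrite lognX !logn_lcm ?expn_gt0 ?x_gt0 ?y_gt0 // !lognX maxnMr.
Qed.

Lemma gcdsP a b : 0 < a ->
  {D | gcds s a b = D ^ s & [/\ 0 < D, D ^ s %| a, D ^ s %| b &
     forall d, 0 < d -> d ^ s %| a -> d ^ s %| b -> d <= D]}.
Proof.
move=> a_gt0; rewrite /gcds.
rewrite (bigmax_eq_arg (Ordinal (a_gt0 : 1 < a.+1))) /=; last by rewrite exp1n !dvd1n.
case: arg_maxnP => [|D /andP [/andP [D_gt0 Da] Db] Dmax]; first by rewrite /= exp1n !dvd1n.
exists (nat_of_ord D) => //; split => // d d_gt0 da db.
have d_lt : d < a.+1 by rewrite ltnS (leq_trans (leq_expn_self d_gt0)) // dvdn_leq.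
by apply: (Dmax (Ordinal d_lt)); rewrite /= d_gt0 da db.
Qed.

Lemma dvdn_gcds a b d : 0 < a -> 0 < d ->
  (d ^ s %| gcds s a b) = (d ^ s %| a) && (d ^ s %| b).
Proof.
move=> a_gt0 d_gt0; have [D -> [D_gt0 Da Db Dmax]] := gcdsP b a_gt0.
apply/idP/andP => [dD | [da db]].
  by split; apply: dvdn_trans dD _.
(* lcm(d, D)^s is again a common divisor, so the maximality of D forces d | D. *)
have L_gt0 : 0 < lcmn d D by rewrite lcmn_gt0 d_gt0.
have dvd_L c : (lcmn d D) ^ s %| c = (d ^ s %| c) && (D ^ s %| c).
  by rewrite expn_lcm // dvdn_lcm.
have /eqP LD : lcmn d D == D.
  by rewrite eqn_leq Dmax ?dvd_L ?da ?db // dvdn_leq ?dvdn_lcmr.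
by rewrite dvdn_exp2r // -LD dvdn_lcml.
Qed.

Lemma gcds_eq1_mobius h r : 0 < h -> 0 < r ->
  (if gcds s h (r ^ s) == 1 then 1%R else 0%R)
  = (\sum_(e <- divisors r | e ^ s %| h) mobius e)%R.
Proof.
(* With (h, r^s)_s = D^s, the e | r with e^s | h are exactly the divisors of D. *)
move=> h_gt0 r_gt0; have [D gcdsE [D_gt0 _ _ _]] := gcdsP (r ^ s) h_gt0.
rewrite -big_filter (eq_big_uniq_mem _ _ (s2 := divisors D)) ?filter_uniq ?divisors_uniq //.
  by rewrite gcdsE -{1}(exp1n s) eqn_exp2r // sum_mobius_divisors.
move=> e; rewrite mem_filter -!dvdn_divisors //.
have [-> | e_gt0] := posnP e; first by rewrite exp0n // !dvd0n !gtn_eqF.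
by rewrite -[e %| D](dvdn_pexp2r _ _ s_gt0) -gcdsE dvdn_gcds // dvdn_pexp2r // andbC.
Qed.

End PowerGcd.

(** * Cohen--Ramanujan sums *)

Lemma csum_big l f : csum l f = (\sum_(i <- l) f i)%C.
Proof. by elim: l => [|x l IH]; rewrite ?big_nil ?big_cons //= IH. Qed.

Lemma Cmult_sumr (I : Type) (l : seq I) (P : pred I) (F : I -> C) c :
  (c * \sum_(i <- l | P i) F i = \sum_(i <- l | P i) c * F i)%C.
Proof.
elim: l => [|x l IH]; rewrite ?big_nil ?big_cons; first by ring.
by case: (P x); rewrite -IH //; ring.
Qed.

Lemma Cmult_suml (I : Type) (l : seq I) (P : pred I) (F : I -> C) c :
  ((\sum_(i <- l | P i) F i) * c = \sum_(i <- l | P i) F i * c)%C.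
Proof. by rewrite Cmult_comm Cmult_sumr; apply: eq_bigr => i _; rewrite Cmult_comm. Qed.

Lemma RtoC_sum (I : Type) (l : seq I) (P : pred I) (F : I -> R) :
  RtoC (\sum_(i <- l | P i) F i)%R = (\sum_(i <- l | P i) RtoC (F i))%C.
Proof. by apply: (big_morph RtoC) => // x y; rewrite RtoC_plus. Qed.

Lemma Cmod_sum (I : Type) (l : seq I) (P : pred I) (F : I -> C) :
  (Cmod (\sum_(i <- l | P i) F i)%C <= \sum_(i <- l | P i) Cmod (F i))%R.
Proof.
elim: l => [|x l IH]; rewrite ?big_nil ?big_cons; first by rewrite Cmod_0; lra.
case: (P x) => //; apply: Rle_trans (Cmod_triangle _ _) _; lra.
Qed.

Lemma e2pi_add x y : e2pi (x + y) = (e2pi x * e2pi y)%C.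
Proof.
rewrite /e2pi /Cmult /= Rmult_plus_distr_l cos_plus sin_plus.
by f_equal; ring.
Qed.

Lemma e2pi_nat k : e2pi (INR k) = RtoC 1.
Proof.
rewrite /e2pi /RtoC (_ : 2 * PI * INR k = 0 + 2 * INR k * PI)%R; last by ring.
by rewrite cos_period sin_period cos_0 sin_0.
Qed.

Lemma e2pi_neq1 t : (0 < t < 1)%R -> e2pi t <> RtoC 1.
Proof.
move=> t01 [cos1 _]; have pi_gt0 := PI_RGT_0.
have sin_gt0 : (0 < sin (PI * t))%R by apply: sin_gt_0; nra.
move: cos1; rewrite (_ : 2 * PI * t = 2 * (PI * t))%R ?cos_2a_sin; nra.
Qed.

Lemma e2pi_frac_neq1 n M : 0 < M -> ~~ (M %| n) -> e2pi (INR n / INR M) <> RtoC 1.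
Proof.
move=> M_gt0 MNn; have M_neq0 : INR M <> 0%R by apply: not_0_INR; lia.
have r_gt0 : 0 < n %% M by rewrite lt0n.
have r_lt : n %% M < M by rewrite ltn_pmod.
rewrite (divn_eq n M) plus_INR mult_INR.
rewrite (_ : (_ + _) / _ = INR (n %/ M) + INR (n %% M) / INR M)%R; last by field.
rewrite e2pi_add e2pi_nat Cmult_1_l; apply: e2pi_neq1; split.
  by apply: Rdiv_lt_0_compat; apply: lt_0_INR; lia.
by apply/Rlt_div_l; [apply: lt_0_INR; lia | rewrite Rmult_1_l; apply: lt_INR; lia].
Qed.

Lemma sum_e2pi M n : 0 < M ->
  (\sum_(j <- iota 1 M) e2pi (INR n * INR j / INR M))%C
  = if M %| n then RtoC (INR M) else RtoC 0.
Proof.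
move=> M_gt0; have M_neq0 : INR M <> 0%R by apply: not_0_INR; lia.
case: ifPn => [/dvdnP [q ->] | MNn].
  rewrite (eq_bigr (fun _ => RtoC 1)) => [|j _]; last first.
    rewrite (_ : INR (q * M) * INR j / INR M = INR (q * j))%R ?e2pi_nat //.
    by rewrite !mult_INR; field.
  rewrite big_const_seq count_predT size_iota.
  by elim: (M) => // m IH; rewrite iterS IH S_INR RtoC_plus Cplus_comm.
set x := (INR n / INR M)%R; set z := e2pi x.
have termE j : e2pi (INR n * INR j / INR M) = e2pi (x * INR j).
  by congr e2pi; rewrite /x; field.
under eq_bigr do rewrite termE.
have -> : iota 1 M = index_iota 1 M.+1 by rewrite /index_iota subn1.
set S := \big[Cplus/_]_(_ <= _ < _ | _) _.
(* Multiplying by z = e(n/M) shifts the sum by one step around a full period. *)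
have zS : (z * S = S)%C.
  have shift : \big[Cplus/RtoC 0]_(1 <= j < M.+2) e2pi (x * INR j)
             = (e2pi x + z * S)%C.
    rewrite big_nat_recl // Rmult_1_r Cmult_sumr; congr Cplus.
    by apply: eq_bigr => j _; rewrite /z -e2pi_add S_INR; congr e2pi; ring.
  have wrap : e2pi (x * INR M.+1) = e2pi x.
    rewrite (_ : x * INR M.+1 = x + INR n)%R ?e2pi_add ?e2pi_nat ?Cmult_1_r //.
    by rewrite S_INR /x; field.
  rewrite big_nat_recr //= wrap -/S in shift.
  by rewrite (_ : z * S = e2pi x + z * S - e2pi x)%C; [rewrite -shift | ]; ring.
have z1_neq0 : (z - RtoC 1)%C <> RtoC 0.
  move=> z1; apply: (e2pi_frac_neq1 M_gt0 MNn).
  by rewrite -/x -/z (_ : z = z - RtoC 1 + RtoC 1)%C; [rewrite z1 | ]; ring.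
by rewrite (_ : S = (z * S - S) / (z - RtoC 1))%C; [rewrite zS | ]; field.
Qed.

Section CohenRamanujan.

Variable s : nat.
Hypothesis s_gt0 : 0 < s.

Lemma cohen_ramanujanE r n : 0 < r ->
  cohen_ramanujan s r n
  = (\sum_(d <- divisors r | d ^ s %| n) mobius (r %/ d) * INR (d ^ s))%C.
Proof.
move=> r_gt0; set N := r ^ s; set f := fun h => e2pi (INR n * INR h / INR N).
have N_gt0 : 0 < N by rewrite expn_gt0 r_gt0.
have coprime_sieve :
    cohen_ramanujan s r n
    = (\sum_(h <- iota 1 N) \sum_(e <- divisors r | e ^ s %| h) mobius e * f h)%C.
  rewrite /cohen_ramanujan csum_big big_filter big_mkcond; apply: eq_big_seq => h.
  rewrite mem_iota => /andP [h_gt0 _]; rewrite -Cmult_suml -RtoC_sum -gcds_eq1_mobius //.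
  by case: ifP => _; rewrite /= ?Cmult_1_l ?Cmult_0_l.
have inner e : e %| r ->
    (\sum_(h <- iota 1 N | e ^ s %| h) mobius e * f h)%C
    = (mobius e * if (r %/ e) ^ s %| n then RtoC (INR ((r %/ e) ^ s)) else RtoC 0)%C.
  move=> er; have e_gt0 := dvdn_gt0 r_gt0 er.
  have es_gt0 : 0 < e ^ s by rewrite expn_gt0 e_gt0.
  have Nq : N = e ^ s * (r %/ e) ^ s by rewrite -expnMn mulnC divnK.
  have ms_gt0 : 0 < (r %/ e) ^ s by rewrite expn_gt0 divn_gt0 // dvdn_leq.
  rewrite -Cmult_sumr big_iota_dvdn ?Nq ?dvdn_mulr // mulKn // -sum_e2pi //.
  congr Cmult; apply: eq_bigr => j _; rewrite /f Nq; congr e2pi.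
  have ms_neq0 : INR ((r %/ e) ^ s) <> 0%R by apply: not_0_INR; lia.
  have es_neq0 : INR (e ^ s) <> 0%R by apply: not_0_INR; lia.
  by rewrite !mult_INR; field.
rewrite coprime_sieve; under eq_bigr do rewrite big_mkcond.
rewrite exchange_big /= [RHS]big_mkcond.
rewrite -(big_divisors_compl _ (fun d => if d ^ s %| n
  then (mobius (r %/ d) * INR (d ^ s))%C else RtoC 0)) //.
apply: eq_big_seq => e; rewrite -dvdn_divisors // => er.
rewrite -big_mkcond inner // divn_compl //.
by case: ifP => _ //; rewrite Cmult_0_r.
Qed.

Lemma cohen_ramanujan_pow r b : 0 < r ->
  cohen_ramanujan s r (b ^ s)
  = (\sum_(d <- divisors r | d %| b) mobius (r %/ d) * INR (d ^ s))%C.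
Proof.
by move=> r_gt0; rewrite cohen_ramanujanE //; apply: eq_bigl => d; rewrite dvdn_pexp2r.
Qed.

Lemma sum_mobius_cohen_ramanujan r a : 0 < r -> 0 < a ->
  (\sum_(d <- divisors a) mobius (a %/ d) * cohen_ramanujan s r (d ^ s))%C
  = if a %| r then (mobius (r %/ a) * INR (a ^ s))%C else RtoC 0.
Proof.
move=> r_gt0 a_gt0.
under eq_bigr do rewrite cohen_ramanujan_pow // Cmult_sumr big_mkcond.
rewrite exchange_big /= (eq_big_seq (fun e =>
  if e == a then (mobius (r %/ e) * INR (e ^ s))%C else RtoC 0)).
  by rewrite -big_mkcond big_pred1_seq ?divisors_uniq // -dvdn_divisors.
move=> e; rewrite -dvdn_divisors // => er; have e_gt0 := dvdn_gt0 r_gt0 er.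
rewrite -big_mkcond -Cmult_suml -RtoC_sum sum_mobius_quotient_multiples //.
by case: eqP => _; rewrite ?Cmult_1_l ?Cmult_0_l.
Qed.

End CohenRamanujan.

(** * Series supported on multiples *)

(* [dilate a u] carries [u m] at index [(a * m.+1).-1], i.e. at the term r = a (m+1)
   of a series indexed by r = k+1 like [g_term], and [zero] elsewhere. *)
Definition dilate (G : AbelianMonoid) (a : nat) (u : nat -> G) (k : nat) : G :=
  if a %| k.+1 then u (k.+1 %/ a).-1 else zero.

Section Dilation.

Variable a : nat.
Hypothesis a_gt0 : 0 < a.

Lemma ndvdn_between q x : a * q < x < a * q.+1 -> ~~ (a %| x).
Proof.
case/andP=> lo hi; apply/dvdnP => [[c x_eq]].
rewrite x_eq [c * a]mulnC !ltn_pmul2l // in lo hi.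
by rewrite ltnS leqNgt lo in hi.
Qed.

Section PartialSums.

Variables (G : AbelianMonoid) (u : nat -> G).

Lemma dilateE m : dilate a u (a * m.+1).-1 = u m.
Proof. by rewrite /dilate prednK ?muln_gt0 ?a_gt0 // dvdn_mulr // mulKn. Qed.

Lemma dilate_gap q k : a * q <= k < (a * q.+1).-1 -> dilate a u k = zero.
Proof. by move=> k_in; rewrite /dilate (negbTE (ndvdn_between (q := q) _)) //; nia. Qed.

Lemma sum_n_m_last (w : nat -> G) n m : n <= m ->
  (forall k, n <= k < m -> w k = zero) -> sum_n_m w n m = w m.
Proof.
move=> le_nm; rewrite -(subnKC le_nm); move: (m - n) => d {m le_nm}.
elim: d n => [|d IH] n wz; first by rewrite addn0 sum_n_n.
rewrite sum_Sn_m; last lia.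
rewrite (wz n); last lia.
by rewrite plus_zero_l addnS -addSn IH // => k k_in; apply: wz; lia.
Qed.

Lemma sum_n_dilate N : sum_n (dilate a u) (a * N.+1).-1 = sum_n u N.
Proof.
elim: N => [|N IH].
  rewrite sum_O /sum_n sum_n_m_last // ?dilateE // => k k_in.
  by apply: (dilate_gap (q := 0)); nia.
rewrite sum_Sn -IH /sum_n (sum_n_m_Chasles _ 0 (a * N.+1).-1); try nia.
rewrite (_ : ((a * N.+1).-1).+1 = a * N.+1); last by nia.
rewrite [sum_n_m _ (a * N.+1) _]sum_n_m_last ?dilateE //; first nia.
by move=> k k_in; apply: (dilate_gap (q := N.+1)); nia.
Qed.

Lemma sum_n_dilate_floor n : a <= n.+1 ->
  sum_n (dilate a u) n = sum_n u (n.+1 %/ a).-1.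
Proof.
move=> an; set q := n.+1 %/ a.
have q_gt0 : 0 < q by rewrite divn_gt0.
have lo : a * q <= n.+1 by rewrite mulnC leq_trunc_div.
have hi : n.+1 < a * q.+1 by rewrite mulnC ltn_ceil.
rewrite -sum_n_dilate prednK // /sum_n (sum_n_m_Chasles _ 0 (a * q).-1 n); try nia.
rewrite [sum_n_m _ _ n](sum_n_m_ext_loc _ (fun _ => zero)).
  by rewrite sum_n_m_const_zero plus_zero_r.
by move=> k k_in; apply: (dilate_gap (q := q)); nia.
Qed.

End PartialSums.

Lemma is_series_dilate (K : AbsRing) (V : NormedModule K) (u : nat -> V) T :
  is_series (dilate a u) T <-> is_series u T.
Proof.
rewrite /is_series; split => lim_u.
  apply: (filterlim_ext (fun N => sum_n (dilate a u) (a * N.+1).-1)) => [N|].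
    exact: sum_n_dilate.
  by apply: filterlim_comp lim_u => P [N HN]; exists N => n nN; apply: HN; nia.
apply: (filterlim_ext_loc (fun n => sum_n u (n.+1 %/ a).-1)).
  by exists a => n an; rewrite sum_n_dilate_floor //; lia.
apply: filterlim_comp lim_u => P [N HN]; exists (a * N.+1) => n nN; apply: HN.
suff : N.+1 <= n.+1 %/ a by lia.
by rewrite leq_divRL // mulnC; lia.
Qed.

Lemma ex_series_dilate (K : AbsRing) (V : NormedModule K) (u : nat -> V) :
  ex_series (dilate a u) <-> ex_series u.
Proof. by split=> [[T] | [T]] /(is_series_dilate u T); exists T. Qed.

Lemma ex_series_subseq (u : nat -> R) : (forall k, 0 <= u k)%R ->
  ex_series u -> ex_series (fun m => u (a * m.+1).-1).
Proof.
move=> u_ge0 u_sum; apply/(ex_series_dilate (V := R_NormedModule)).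
apply: (ex_series_le _ u) => // k; rewrite /norm /= /abs /= /dilate.
case: ifP => [ak|_]; last by rewrite Rabs_R0.
have q_gt0 : 0 < k.+1 %/ a by rewrite divn_gt0 // dvdn_leq.
by rewrite prednK // mulnC divnK // Rabs_pos_eq //; apply: Rle_refl.
Qed.

End Dilation.

Lemma Rle_sum (I : Type) (l : seq I) (F G : I -> R) : (forall i, F i <= G i)%R ->
  (\sum_(i <- l) F i <= \sum_(i <- l) G i)%R.
Proof.
move=> FG; elim: l => [|x l IH]; rewrite ?big_nil ?big_cons; first lra.
by have := FG x; lra.
Qed.

Lemma is_series_zero (K : AbsRing) (V : NormedModule K) :
  is_series (fun _ => zero : V) zero.
Proof.
apply: (filterlim_ext (fun _ => zero)) => [n|]; last exact: filterlim_const.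
by rewrite /sum_n sum_n_m_const_zero.
Qed.

Lemma ex_series_sumR (I : eqType) (l : seq I) (F : I -> nat -> R) :
  (forall i, i \in l -> ex_series (F i)) ->
  ex_series (fun k => \sum_(i <- l) F i k)%R.
Proof.
elim: l => [|x l IH] F_sum.
  exists zero; apply: (is_series_ext (fun _ => zero)) => [k|]; first by rewrite big_nil.
  exact: is_series_zero.
apply: (ex_series_ext (fun k => plus (F x k) (\sum_(i <- l) F i k)%R)) => [k|].
  by rewrite big_cons.
apply: ex_series_plus; first by apply: F_sum; rewrite inE eqxx.
by apply: IH => i il; apply: F_sum; rewrite inE il orbT.
Qed.

Lemma is_series_sumC (I : eqType) (l : seq I) (F : I -> nat -> C) (L : I -> C) :
  (forall i, i \in l -> is_series (F i) (L i)) ->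
  is_series (fun k => \sum_(i <- l) F i k)%C (\sum_(i <- l) L i)%C.
Proof.
elim: l => [|x l IH] F_lim.
  rewrite big_nil; apply: (is_series_ext (fun _ => zero)) => [k|]; first by rewrite big_nil.
  exact: is_series_zero.
rewrite big_cons; apply: (is_series_ext (fun k => plus (F x k) (\sum_(i <- l) F i k)%C)).
  by move=> k; rewrite big_cons.
apply: is_series_plus; first by apply: F_lim; rewrite inE eqxx.
by apply: IH => i il; apply: F_lim; rewrite inE il orbT.
Qed.

Lemma is_series_uniq (K : AbsRing) (V : NormedModule K) (u : nat -> V) S T :
  is_series u S -> is_series u T -> S = T.
Proof.
exact: (filterlim_locally_unique (FF := Proper_StrongProper _ eventually_filter)).
Qed.

Section MobiusInversionOfSeries.

Variables (s : nat) (ghat : nat -> C).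
Hypothesis s_gt0 : 0 < s.

Lemma gamma_term_dvdn d k : d %| k.+1 ->
  gamma_term ghat d (k.+1 %/ d).-1 = (ghat k.+1 * mobius (k.+1 %/ d))%C.
Proof.
move=> dk; have d_gt0 : 0 < d by case: d dk.
have q_gt0 : 0 < k.+1 %/ d by rewrite divn_gt0 // dvdn_leq.
by rewrite /gamma_term prednK // mulnC divnK.
Qed.

Lemma sum_mobius_g_term a k : 0 < a ->
  (\sum_(d <- divisors a) mobius (a %/ d) * g_term s ghat d k)%C
  = dilate a (fun m => INR (a ^ s) * gamma_term ghat a m)%C k.
Proof.
move=> a_gt0; rewrite /g_term.
under eq_bigr do rewrite Cmult_comm -Cmult_assoc [(_ * RtoC _)%C]Cmult_comm.
rewrite -Cmult_sumr sum_mobius_cohen_ramanujan // /dilate.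
case: ifP => ak; last by rewrite Cmult_0_r.
rewrite gamma_term_dvdn //; ring.
Qed.

Lemma ex_series_gamma_of_g a : 0 < a ->
  (forall d, 0 < d -> ex_series (fun k => Cmod (g_term s ghat d k))) ->
  ex_series (fun m => Cmod (gamma_term ghat a m)).
Proof.
move=> a_gt0 g_abs; have as_gt0 : (0 < INR (a ^ s))%R.
  by apply/lt_0_INR/ltP; rewrite expn_gt0 a_gt0.
set b := fun m =>
  (/ INR (a ^ s) * \sum_(d <- divisors a) Cmod (g_term s ghat d (a * m.+1).-1))%R.
apply: (ex_series_le _ b) => [m|].
  rewrite /norm /= /abs /= Rabs_pos_eq; last exact: Cmod_ge_0.
  apply: (Rmult_le_reg_l (INR (a ^ s))) => //.
  rewrite /b -Rmult_assoc Rinv_r ?Rmult_1_l; last lra.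
  have -> : (INR (a ^ s) * Cmod (gamma_term ghat a m)
            = Cmod (INR (a ^ s) * gamma_term ghat a m)%C)%R.
    by rewrite Cmod_mult Cmod_R Rabs_pos_eq //; lra.
  rewrite -(dilateE a_gt0 (fun m => INR (a ^ s) * gamma_term ghat a m)%C).
  rewrite -sum_mobius_g_term //; apply: Rle_trans (Cmod_sum _ _ _) _.
  apply: Rle_sum => d; rewrite Cmod_mult Cmod_R.
  by have := mobius_le1 (a %/ d); have := Cmod_ge_0 (g_term s ghat d (a * m.+1).-1); nra.
rewrite /b; apply: (ex_series_scal (V := R_NormedModule) (/ INR (a ^ s))%R).
apply: ex_series_sumR => d; rewrite -dvdn_divisors // => da.
apply: (ex_series_subseq a_gt0 (u := fun k => Cmod (g_term s ghat d k))).
  by move=> k; apply: Cmod_ge_0.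
by apply: g_abs; apply: dvdn_gt0 a_gt0 da.
Qed.

Lemma ex_series_g_of_gamma a : 0 < a ->
  (forall d, 0 < d -> ex_series (fun m => Cmod (gamma_term ghat d m))) ->
  ex_series (fun k => Cmod (g_term s ghat a k)).
Proof.
move=> a_gt0 gamma_abs.
set v := fun d => dilate d (fun m => INR (d ^ s) * Cmod (gamma_term ghat d m))%R.
apply: (ex_series_le _ (fun k => \sum_(d <- divisors a) v d k)%R) => [k|].
  rewrite /norm /= /abs /= Rabs_pos_eq /g_term; last exact: Cmod_ge_0.
  rewrite cohen_ramanujan_pow // big_divisors_dvdnC // Cmult_sumr.
  apply: Rle_trans (Cmod_sum _ _ _) _; rewrite [X in (X <= _)%R]big_mkcond.
  apply: Rle_sum => d; rewrite /v /dilate; case: ifP => dk; last first.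
    by rewrite /zero /=; apply: Rle_refl.
  rewrite gamma_term_dvdn // !Cmod_mult !Cmod_R (Rabs_pos_eq (INR _)); last exact: pos_INR.
  by apply: Req_le; ring.
apply: ex_series_sumR => d; rewrite -dvdn_divisors // => da.
apply/(ex_series_dilate (dvdn_gt0 a_gt0 da) (V := R_NormedModule)).
apply: (ex_series_scal (V := R_NormedModule)).
by apply: gamma_abs; apply: dvdn_gt0 a_gt0 da.
Qed.

Lemma mobius_convolution_g a S (g : nat -> C) : 0 < a ->
  (forall d, 0 < d -> is_series (g_term s ghat d) (g d)) ->
  is_series (gamma_term ghat a) S ->
  (INR (a ^ s) * S)%C = csum (divisors a) (fun d => mobius (a %/ d) * g d)%C.
Proof.
move=> a_gt0 g_sum gamma_sum; rewrite csum_big.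
apply: (is_series_uniq (u := fun m => INR (a ^ s) * gamma_term ghat a m)%C).
  by have := is_series_scal (K := C_AbsRing) (RtoC (INR (a ^ s))) _ _ gamma_sum.
apply/(is_series_dilate a_gt0).
apply: (is_series_ext
  (fun k => \sum_(d <- divisors a) mobius (a %/ d) * g_term s ghat d k)%C).
  by move=> k; apply: sum_mobius_g_term.
apply: is_series_sumC => d; rewrite -dvdn_divisors // => da.
apply: (is_series_scal (K := C_AbsRing)); apply: g_sum; exact: dvdn_gt0 a_gt0 da.
Qed.

End MobiusInversionOfSeries.

Theorem mainTheorem3 (s : nat) (ghat : nat -> C) :
  (0 < s)%N ->
  ((forall a : nat, (0 < a)%N -> ex_series (fun k => Cmod (g_term s ghat a k)))
   <->
   (forall a : nat, (0 < a)%N -> ex_series (fun k => Cmod (gamma_term ghat a k))))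
  /\
  ((forall a : nat, (0 < a)%N -> ex_series (fun k => Cmod (g_term s ghat a k))) ->
   forall (g : nat -> C),
     (forall d : nat, (0 < d)%N -> is_series (g_term s ghat d) (g d)) ->
   forall (a : nat) (S : C), (0 < a)%N ->
     is_series (gamma_term ghat a) S ->
     Cmult (RtoC (INR (a ^ s))) S
     = csum (divisors a) (fun d => Cmult (RtoC (mobius (a %/ d))) (g d))).
Proof.
move=> s_gt0; split.
  split=> abs_conv a a_gt0.
    exact: (ex_series_gamma_of_g s_gt0 a_gt0 abs_conv).
  exact: (ex_series_g_of_gamma s_gt0 a_gt0 abs_conv).
(* The identity only needs the convergence of each series g(d). *)
move=> _ g g_sum a S a_gt0 S_sum.
exact: (mobius_convolution_g s_gt0 a_gt0 g_sum S_sum).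
Qed.
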